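(* Let $A,B$ be probabilistic models and let $\omega$ be a state of the forward product $\overrightarrow{AB}$. Consider: (a) for all events $a,b$ of $A$, if $\hat a=\hat b$ then $\omega(a,c)=\omega(b,c)$ for all events $c$ of $B$; (b) $\omega(E,y)=\omega(F,y)$ for all tests $E,F\in\mathcal{M}(A)$ and all $y\in X(B)$; (c) for all events $a,b$ of $A$, $a\sim b$ implies $\omega(a,y)=\omega(b,y)$ for all $y\in X(B)$. Then (a) implies (b) and (c), and (b) and (c) are equivalent.
   Context: A probabilistic model $A$ consists of an irredundant collection $\mathcal{M}(A)$ of nonempty sets (tests) with outcome set $X(A)=\bigcup\mathcal{M}(A)$ and a convex set $\Omega(A)$ of probability weights (functions $\alpha:X(A)\to[0,1]$ summing to $1$ over each test). Events are subsets of tests; $\alpha(a)=\sum_{x\in a}\alpha(x)$. Events $a,b$ are orthogonal if disjoint with union an event, complements if disjoint with union a test, and perspective ($a\sim b$) if they have a common complement. $\mathbb{V}(A)$ is the span of $\Omega(A)$ in $\mathbb{R}^{X(A)}$ and for an event $a$, $\hat a$ is the linear functional $\mu\mapsto\sum_{x\in a}\mu(x)$ on $\mathbb{V}(A)$. The forward product $\overrightarrow{AB}$ has outcome set $X(A)\times X(B)$, tests all sets $\bigcup_{x\in E}\{x\}\times F_x$ with $E\in\mathcal{M}(A)$ and $F:E\to\mathcal{M}(B)$, and states all functions $\omega(x,y)=\alpha(x)\beta_x(y)$ with $\alpha\in\Omega(A)$ and $\beta:X(A)\to\Omega(B)$. For sets $a\subseteq X(A)$, $c\subseteq X(B)$ write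 $\omega(a,c)=\sum_{x\in a,y\in c}\omega(x,y)$ and $\omega(a,y)=\omega(a,\{y\})$. *)

From HB Require Import structures.
From mathcomp Require Import all_boot all_order all_algebra.
From mathcomp Require Import finmap.
From mathcomp Require Import reals.
Set Implicit Arguments. Unset Strict Implicit. Unset Printing Implicit Defensive.
Import Order.TTheory GRing.Theory Num.Theory.
Local Open Scope ring_scope.
Local Open Scope fset_scope.
Local Open Scope ring_scope.

Section Models.
Variable R : realType.

Definition fsum (X : choiceType) (f : X -> R) (a : {fset X}) : R :=
  \sum_(x <- a) f x.

Definition prob_weight (X : choiceType) (tests : {fset X} -> Prop) (alpha : X -> R) :=
  (forall x, 0 <= alpha x <= 1) /\ (forall E, tests E -> fsum alpha E = 1).

(* A probabilistic model with outcome type X (= X(A), the union of the tests);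
   tests are (locally) finite. *)
Record model (X : choiceType) := Model {
  tests : {fset X} -> Prop;
  states : (X -> R) -> Prop;
  tests_nonempty : forall E, tests E -> E != fset0;
  tests_irredundant : forall E F, tests E -> tests F -> E `<=` F -> E = F;
  tests_cover : forall x : X, exists E, tests E /\ x \in E;
  states_weights : forall alpha, states alpha -> prob_weight tests alpha;
  states_convex : forall alpha beta (t : R), states alpha -> states beta ->
     0 <= t <= 1 -> states (fun x => (t * alpha x + (1 - t) * beta x)%R)
}.

Variable X : choiceType.
Variable A : model X.

Definition event (a : {fset X}) := exists E, tests A E /\ a `<=` E.

Definition complements (a b : {fset X}) :=
  [disjoint a & b] /\ tests A (a `|` b).

Definition perspective (a b : {fset X}) :=
  exists c, event c /\ complements a c /\ complements b c.

Definition in_span (mu : X -> R) :=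
  exists (n : nat) (c : 'I_n -> R) (al : 'I_n -> X -> R),
    (forall i, states A (al i)) /\
    mu = (fun x => \sum_(i < n) c i * al i x).

(* a^ = b^ as linear functionals on V(A) *)
Definition hat_eq (a b : {fset X}) :=
  forall mu, in_span mu -> fsum mu a = fsum mu b.

End Models.

Definition fwd_state (R : realType) (XA XB : choiceType)
  (A : model R XA) (B : model R XB) (omega : XA * XB -> R) :=
  exists alpha, states A alpha /\
  exists beta : XA -> XB -> R, (forall x, states B (beta x)) /\
    omega = (fun p => alpha p.1 * beta p.1 p.2).

Definition wsum (R : realType) (XA XB : choiceType) (omega : XA * XB -> R)
  (a : {fset XA}) (c : {fset XB}) : R :=
  \sum_(x <- a) \sum_(y <- c) omega (x, y).

(** The sum of any weight in the span of the states is the same over every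
    test, so it takes the same value on perspective events a, b: both a ∪ c
    and b ∪ c are tests for a common complement c. Hence (a), applied to the
    events a, b of A and the event {y} of B, gives (c). Condition (b) is (c)
    for pairs of tests, which are perspective through the empty event.
    Conversely (b) says that x ↦ ω(x, y) has the same sum over every test,
    which is all the first argument used, so (b) gives (c). *)

From HB Require Import structures.
From mathcomp Require Import all_boot all_order all_algebra.
From mathcomp Require Import finmap.
From mathcomp Require Import reals.
Set Implicit Arguments. Unset Strict Implicit. Unset Printing Implicit Defensive.
Import GRing.Theory.
Local Open Scope fset_scope.
Local Open Scope ring_scope.

Section TestSums.
Variables (R : realType) (X : choiceType) (A : model R X).

Lemma fsum_fsetU (f : X -> R) (a c : {fset X}) :
  [disjoint a & c] -> fsum f (a `|` c) = fsum f a + fsum f c.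
Proof.
move=> dac; rewrite /fsum -big_cat; apply/perm_big/uniq_perm.
- exact: fset_uniq.
- rewrite cat_uniq !fset_uniq andbT /=; apply/hasPn => x xc.
  by apply/negP => /(fdisjointP dac); rewrite xc.
- by move=> x; rewrite mem_cat inE.
Qed.

Lemma perspective_fsum_eq (f : X -> R) (a b : {fset X}) :
  (forall E F, tests A E -> tests A F -> fsum f E = fsum f F) ->
  perspective A a b -> fsum f a = fsum f b.
Proof.
move=> f_tests [c [_ [[dac tac] [dbc tbc]]]].
by apply: (@addIr _ (fsum f c)); rewrite -!fsum_fsetU // (f_tests _ _ tac tbc).
Qed.

Lemma span_fsum_tests_eq (mu : X -> R) (E F : {fset X}) :
  in_span A mu -> tests A E -> tests A F -> fsum mu E = fsum mu F.
Proof.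
move=> [n [c [al [al_states ->]]]].
suff fsum_test G : tests A G -> fsum (fun x => \sum_(i < n) c i * al i x) G
                              = \sum_(i < n) c i.
  by move=> /fsum_test -> /fsum_test ->.
move=> tG; rewrite /fsum exchange_big /=; apply: eq_bigr => i _.
have [_ al_test] := states_weights (al_states i).
by rewrite -mulr_sumr [X in _ * X]al_test // mulr1.
Qed.

Lemma perspective_hat_eq (a b : {fset X}) :
  perspective A a b -> hat_eq A a b.
Proof.
by move=> ab mu mu_span; apply: perspective_fsum_eq ab => E F;
  apply: span_fsum_tests_eq.
Qed.

Lemma test_event (E : {fset X}) : tests A E -> event A E.
Proof. by exists E; split. Qed.

Lemma tests_perspective (E F : {fset X}) :
  tests A E -> tests A F -> perspective A E F.
Proof.
move=> tE tF; exists fset0; split; first by exists E; split; rewrite ?fsub0set.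
by rewrite /complements !fsetU0 !fdisjointX0.
Qed.

Lemma fset1_event (y : X) : event A [fset y].
Proof.
by have [E [tE yE]] := tests_cover A y; exists E; rewrite fsub1set.
Qed.

End TestSums.

Lemma wsum_fset1 (R : realType) (XA XB : choiceType) (omega : XA * XB -> R)
  (a : {fset XA}) (y : XB) :
  wsum omega a [fset y] = fsum (fun x => omega (x, y)) a.
Proof. by apply: eq_bigr => x _; rewrite big_seq_fset1. Qed.

Theorem proposition2p15 (R : realType) (XA XB : choiceType)
  (A : model R XA) (B : model R XB) (omega : XA * XB -> R)
  (Homega : fwd_state A B omega) :
  let Pa := forall a b : {fset XA}, event A a -> event A b -> hat_eq A a b ->
              forall c : {fset XB}, event B c -> wsum omega a c = wsum omega b c in
  let Pb := forall E F : {fset XA}, tests A E -> tests A F ->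
              forall y : XB, wsum omega E [fset y] = wsum omega F [fset y] in
  let Pc := forall a b : {fset XA}, event A a -> event A b -> perspective A a b ->
              forall y : XB, wsum omega a [fset y] = wsum omega b [fset y] in
  (Pa -> Pb) /\ (Pa -> Pc) /\ (Pb <-> Pc).
Proof.
move=> Pa Pb Pc.
have PaPc : Pa -> Pc.
  move=> Ha a b ea eb ab y.
  by apply: Ha => //; [apply: perspective_hat_eq | apply: fset1_event].
have PcPb : Pc -> Pb.
  by move=> Hc E F tE tF; apply: Hc;
    [apply: test_event | apply: test_event | apply: tests_perspective].
have PbPc : Pb -> Pc.
  move=> Hb a b _ _ ab y; rewrite !wsum_fset1.
  by apply: perspective_fsum_eq ab => E F tE tF; rewrite -!wsum_fset1 (Hb _ _ tE tF).
by split; [move=> /PaPc /PcPb | split; last split].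
Qed.
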